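(* Let $\alpha,\beta,\gamma\in\mathbb{R}$ with $\gamma\neq 0$, and let $G_2$ be the connected, simply connected Lie group whose Lie algebra $\mathfrak{g}_2$ has a basis $\{e_1,e_2,e_3\}$ with $[e_1,e_2]=\gamma e_2-\beta e_3$, $[e_1,e_3]=-\beta e_2-\gamma e_3$, $[e_2,e_3]=\alpha e_1$, equipped with the left-invariant Lorentzian metric $g$ for which $\{e_1,e_2,e_3\}$ is pseudo-orthonormal with $e_3$ timelike, and with the product structure $J$. Let $\lambda_0,c\in\mathbb{R}$. Then there exists a derivation $D$ of $\mathfrak{g}_2$ with $\widetilde{\mathrm{Ric}}^1=(s^1\lambda_0+c)\mathrm{Id}+D$ (i.e. $(G_2,g,J)$ is an algebraic Schouten soliton associated to the Kobayashi–Nomizu connection $\nabla^1$) if and only if $\alpha=\beta=0$ and $c=-\gamma^2+2\gamma^2\lambda_0$.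
   Context: Pseudo-orthonormal means $g(e_1,e_1)=g(e_2,e_2)=1$, $g(e_3,e_3)=-1$, $g(e_i,e_j)=0$ for $i\neq j$; left-invariant tensors are identified with their values on $\mathfrak{g}$. $\nabla$ is the Levi-Civita connection of $g$. The product structure $J$ is the left-invariant endomorphism with $Je_1=e_1$, $Je_2=e_2$, $Je_3=-e_3$. The canonical connection is $\nabla^0_XY=\nabla_XY-\frac12(\nabla_XJ)JY$, and the Kobayashi–Nomizu connection is $\nabla^1_XY=\nabla^0_XY-\frac14[(\nabla_YJ)JX-(\nabla_{JY}J)X]$. For $k=0,1$: $R^k(X,Y)Z=\nabla^k_X\nabla^k_YZ-\nabla^k_Y\nabla^k_XZ-\nabla^k_{[X,Y]}Z$; $\rho^k(X,Y)=-g(R^k(X,e_1)Y,e_1)-g(R^k(X,e_2)Y,e_2)+g(R^k(X,e_3)Y,e_3)$; $\widetilde\rho^k(X,Y)=\frac12(\rho^k(X,Y)+\rho^k(Y,X))$; $\widetilde{\mathrm{Ric}}^k$ is defined by $\widetilde\rho^k(X,Y)=g(\widetilde{\mathrm{Ric}}^k(X),Y)$; and $s^k=\widetilde\rho^k(e_1,e_1)+\widetilde\rho^k(e_2,e_2)-\widetilde\rho^k(e_3,e_3)$. A derivation of $\mathfrak{g}$ is a linear map $D$ with $D[X,Y]=[DX,Y]+[X,DY]$. $(G,g,J)$ is an algebraic Schouten soliton associated to $\nabla^k$ (with real constants $\lambda_0,c$) if $\widetilde{\mathrm{Ric}}^k=(s^k\lambda_0+c)\mathrm{Id}+D$ for some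 derivation $D$. *)

(* Left-invariant objects on the 3-dim Lie group G_2 are
   identified with their values on the Lie algebra g_2 = R^3 (row vectors),
   coordinates taken w.r.t. the basis (e1,e2,e3) = (e 0, e 1, e 2). *)
From HB Require Import structures.
From mathcomp Require Import all_boot all_order all_algebra.
Set Implicit Arguments. Unset Strict Implicit. Unset Printing Implicit Defensive.
Import Order.TTheory GRing.Theory Num.Theory.
Local Open Scope ring_scope.

Section Defs.
Variable R : realFieldType.

Definition vec := 'rV[R]_3.

Definition vec3 (a b c : R) : vec := \row_(i < 3) [:: a; b; c]`_i.

Definition e (i : 'I_3) : vec := delta_mx 0 i.

(* Lie bracket of g_2 :
   [e1,e2] = gam e2 - bet e3, [e1,e3] = - bet e2 - gam e3, [e2,e3] = alp e1,
   extended bilinearly and skew-symmetrically. *)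
Definition br2 (alp bet gam : R) (X Y : vec) : vec :=
  let x1 := X 0 0 in let x2 := X 0 1 in let x3 := X 0 2 in
  let y1 := Y 0 0 in let y2 := Y 0 1 in let y3 := Y 0 2 in
  (x1 * y2 - x2 * y1) *: (gam *: e 1 - bet *: e 2)
  + (x1 * y3 - x3 * y1) *: (- bet *: e 1 - gam *: e 2)
  + (x2 * y3 - x3 * y2) *: (alp *: e 0).

Definition eps (k : 'I_3) : R := if k == 2%N :> nat then -1 else 1.
Definition gm (X Y : vec) : R := \sum_(k < 3) eps k * X 0 k * Y 0 k.

Variable br : vec -> vec -> vec.

(* Levi-Civita connection of a left-invariant metric on left-invariant fields,
   given by the Koszul formula
   2 g(nabla_X Y, Z) = g([X,Y],Z) - g([Y,Z],X) + g([Z,X],Y). *)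
Definition nablaLC (X Y : vec) : vec :=
  \sum_(k < 3) (eps k * ((gm (br X Y) (e k) - gm (br Y (e k)) X
                           + gm (br (e k) X) Y) / 2)) *: e k.

Definition Jmx : 'M[R]_3 := diag_mx (vec3 1 1 (-1)).
Definition J (X : vec) : vec := X *m Jmx.

Definition nablaJ (X Y : vec) : vec := nablaLC X (J Y) - J (nablaLC X Y).

Definition nabla0 (X Y : vec) : vec := nablaLC X Y - (1/2) *: nablaJ X (J Y).

Definition nabla1 (X Y : vec) : vec :=
  nabla0 X Y - (1/4) *: (nablaJ Y (J X) - nablaJ (J Y) X).

Definition curv (nb : vec -> vec -> vec) (X Y Z : vec) : vec :=
  nb X (nb Y Z) - nb Y (nb X Z) - nb (br X Y) Z.

Definition rho (nb : vec -> vec -> vec) (X Y : vec) : R :=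
  - gm (curv nb X (e 0) Y) (e 0) - gm (curv nb X (e 1) Y) (e 1)
  + gm (curv nb X (e 2) Y) (e 2).

Definition rhot (nb : vec -> vec -> vec) (X Y : vec) : R :=
  (rho nb X Y + rho nb Y X) / 2.

Definition ricop (nb : vec -> vec -> vec) (X : vec) : vec :=
  \sum_(k < 3) (eps k * rhot nb X (e k)) *: e k.

Definition scal (nb : vec -> vec -> vec) : R :=
  rhot nb (e 0) (e 0) + rhot nb (e 1) (e 1) - rhot nb (e 2) (e 2).

(* derivations of (R^3, br); D acts on row vectors on the right *)
Definition is_derivation (D : 'M[R]_3) : Prop :=
  forall X Y : vec, br X Y *m D = br (X *m D) Y + br X (Y *m D).

Definition alg_schouten_soliton (nb : vec -> vec -> vec) (lam0 c : R) : Prop :=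
  exists D : 'M[R]_3, is_derivation D /\
    forall X : vec, ricop nb X = (scal nb * lam0 + c) *: X + X *m D.

End Defs.

(* All objects are left-invariant, so everything reduces to linear algebra on
   g_2 = R^3.  In coordinates the Kobayashi-Nomizu connection is
   nabla1_X Y = (gam x2 y2 - alp x3 y2, - gam x2 y1 + bet x3 y1, - gam x1 y3),
   whose Ricci operator is right multiplication by the matrix [ric1_mx] and
   whose scalar curvature is - 2 gam^2 - bet^2 - alp bet.  Since the soliton
   equation forces D = Ric - k Id with k = s lam0 + c, a soliton exists iff
   Ric - k Id is a derivation.  The derivation identity on (e1,e2) and (e1,e3)
   yields gam (k + gam^2 + bet^2 + alp bet) = 0, gam^2 (alp - bet) = 0 and
   alp (alp^2 + gam^2) = 0, hence alp = bet = 0 and k = - gam^2; conversely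
   Ric + gam^2 Id = diag(0, 0, gam^2) is then a derivation. *)

From HB Require Import structures.
From mathcomp Require Import all_boot all_order all_algebra.
From mathcomp Require Import ring lra.
Set Implicit Arguments. Unset Strict Implicit. Unset Printing Implicit Defensive.
Import Order.TTheory GRing.Theory Num.Theory.
Local Open Scope ring_scope.

Section Coordinates.
Variable R : realFieldType.
Implicit Types a b c k : R.

Lemma vec3E0 a b c : vec3 a b c 0 0 = a. Proof. by rewrite mxE. Qed.
Lemma vec3E1 a b c : vec3 a b c 0 1 = b. Proof. by rewrite mxE. Qed.
Lemma vec3E2 a b c : vec3 a b c 0 2 = c. Proof. by rewrite mxE. Qed.

Lemma vec3_coord (X : vec R) : X = vec3 (X 0 0) (X 0 1) (X 0 2).
Proof.
by apply/rowP => -[[|[|[|i]]] Hi]; rewrite mxE //=; congr (X _ _); apply: val_inj.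
Qed.

Lemma vec3_inj a b c a' b' c' :
  vec3 a b c = vec3 a' b' c' -> [/\ a = a', b = b' & c = c'].
Proof. by move/rowP=> E; split; [move: (E 0) | move: (E 1) | move: (E 2)]; rewrite !mxE. Qed.

Lemma vec3D a b c a' b' c' :
  vec3 a b c + vec3 a' b' c' = vec3 (a + a') (b + b') (c + c').
Proof. by apply/rowP => -[[|[|[|i]]] Hi]; rewrite !mxE. Qed.

Lemma vec3N a b c : - vec3 a b c = vec3 (- a) (- b) (- c).
Proof. by apply/rowP => -[[|[|[|i]]] Hi]; rewrite !mxE. Qed.

Lemma vec3Z k a b c : k *: vec3 a b c = vec3 (k * a) (k * b) (k * c).
Proof. by apply/rowP => -[[|[|[|i]]] Hi]; rewrite !mxE. Qed.

Lemma e0E : e R 0 = vec3 1 0 0.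
Proof. by apply/rowP => -[[|[|[|i]]] Hi]; rewrite !mxE. Qed.
Lemma e1E : e R 1 = vec3 0 1 0.
Proof. by apply/rowP => -[[|[|[|i]]] Hi]; rewrite !mxE. Qed.
Lemma e2E : e R 2 = vec3 0 0 1.
Proof. by apply/rowP => -[[|[|[|i]]] Hi]; rewrite !mxE. Qed.

Lemma big_ord3 (V : zmodType) (F : 'I_3 -> V) : \sum_(k < 3) F k = F 0 + F 1 + F 2.
Proof.
rewrite !big_ord_recr big_ord0 /= add0r.
by congr (F _ + F _ + F _); apply: val_inj.
Qed.

Lemma eps0 : eps R 0 = 1. Proof. by []. Qed.
Lemma eps1 : eps R 1 = 1. Proof. by []. Qed.
Lemma eps2 : eps R 2 = -1. Proof. by []. Qed.

Lemma J_vec3 a b c : J (vec3 a b c) = vec3 a b (- c).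
Proof.
by apply/rowP => -[[|[|[|i]]] Hi]; rewrite /J /Jmx mul_mx_diag !mxE /= ?mulr1 ?mulrN1.
Qed.

Lemma gm_vec3 a b c a' b' c' :
  gm (vec3 a b c) (vec3 a' b' c') = a * a' + b * b' - c * c'.
Proof. by rewrite /gm big_ord3 eps0 eps1 eps2 !mxE /=; ring. Qed.

Definition mx_of_rows (r0 r1 r2 : vec R) : 'M[R]_3 :=
  \matrix_(i < 3) [:: r0; r1; r2]`_i.

Lemma vec3_mul_rows a b c r0 r1 r2 :
  vec3 a b c *m mx_of_rows r0 r1 r2 = a *: r0 + b *: r1 + c *: r2.
Proof. by apply/rowP => j; rewrite !mxE big_ord3 !mxE /=. Qed.

End Coordinates.

Lemma alg_schouten_soliton_mx (R : realFieldType) (br nb : vec R -> vec R -> vec R)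
    (M : 'M_3) lam0 c :
  (forall X, ricop br nb X = X *m M) ->
  alg_schouten_soliton br nb lam0 c <->
  is_derivation br (M - (scal br nb * lam0 + c)%:M).
Proof.
move=> ricM; set k := _ + c; split=> [[D [derD ricD]] | derD].
  suff -> : M - k%:M = D by [].
  apply/row_matrixP => i.
  by rewrite !rowE mulmxBr mul_mx_scalar -ricM ricD [k *: _ + _]addrC addrK.
by exists (M - k%:M); split=> // X; rewrite ricM mulmxBr mul_mx_scalar addrC subrK.
Qed.

Ltac vec3_simpl := rewrite ?(e0E, e1E, e2E, vec3E0, vec3E1, vec3E2, vec3D, vec3N,
   vec3Z, J_vec3, gm_vec3, big_ord3, eps0, eps1, eps2).

Section G2.
Variables (R : realFieldType) (alp bet gam : R).
Notation br := (br2 alp bet gam).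

Lemma br2_vec3 x1 x2 x3 y1 y2 y3 : br (vec3 x1 x2 x3) (vec3 y1 y2 y3) =
  vec3 (alp * (x2 * y3 - x3 * y2))
       (gam * (x1 * y2 - x2 * y1) - bet * (x1 * y3 - x3 * y1))
       (- bet * (x1 * y2 - x2 * y1) - gam * (x1 * y3 - x3 * y1)).
Proof. by rewrite /br2; vec3_simpl; congr vec3; ring. Qed.

Lemma nablaLC_vec3 x1 x2 x3 y1 y2 y3 :
  nablaLC br (vec3 x1 x2 x3) (vec3 y1 y2 y3) =
  vec3 (gam * (x2 * y2 + x3 * y3) + alp / 2 * (x2 * y3 - x3 * y2))
       ((alp / 2 - bet) * x1 * y3 - gam * x2 * y1 + alp / 2 * x3 * y1)
       ((alp / 2 - bet) * x1 * y2 + alp / 2 * x2 * y1 + gam * x3 * y1).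
Proof.
rewrite /nablaLC big_ord3 !e0E !e1E !e2E !br2_vec3; vec3_simpl.
by congr vec3; field.
Qed.

Lemma nabla1_vec3 x1 x2 x3 y1 y2 y3 :
  nabla1 br (vec3 x1 x2 x3) (vec3 y1 y2 y3) =
  vec3 (gam * x2 * y2 - alp * x3 * y2) (- gam * x2 * y1 + bet * x3 * y1)
       (- gam * x1 * y3).
Proof.
rewrite /nabla1 /nabla0 /nablaJ; rewrite ?(J_vec3, nablaLC_vec3); vec3_simpl.
by congr vec3; field.
Qed.

Lemma rho_nabla1_vec3 x1 x2 x3 y1 y2 y3 :
  rho br (nabla1 br) (vec3 x1 x2 x3) (vec3 y1 y2 y3) =
  - (gam ^+ 2 + bet ^+ 2) * x1 * y1 - (gam ^+ 2 + alp * bet) * x2 * y2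
  - alp * gam * x2 * y3.
Proof.
rewrite /rho /curv !e0E !e1E !e2E ?(nabla1_vec3, br2_vec3); vec3_simpl.
by ring.
Qed.

Definition ric1_mx : 'M[R]_3 :=
  mx_of_rows (vec3 (- (gam ^+ 2 + bet ^+ 2)) 0 0)
             (vec3 0 (- (gam ^+ 2 + alp * bet)) (alp * gam / 2))
             (vec3 0 (- (alp * gam / 2)) 0).

Lemma ricop_nabla1 X : ricop br (nabla1 br) X = X *m ric1_mx.
Proof.
rewrite (vec3_coord X); move: (X 0 0) (X 0 1) (X 0 2) => x1 x2 x3.
rewrite vec3_mul_rows /ricop /rhot big_ord3 !e0E !e1E !e2E !rho_nabla1_vec3; vec3_simpl.
by congr vec3; field.
Qed.

Lemma scal_nabla1 : scal br (nabla1 br) = - 2 * gam ^+ 2 - bet ^+ 2 - alp * bet.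
Proof. by rewrite /scal /rhot !e0E !e1E !e2E !rho_nabla1_vec3; field. Qed.

Lemma ric1_shift_derivation k : gam != 0 ->
  is_derivation br (ric1_mx - k%:M) <-> [/\ alp = 0, bet = 0 & k = - gam ^+ 2].
Proof.
move=> gam_neq0; split=> [derD | [alp0 bet0 ->]].
- have := derD (e R 0) (e R 1); have := derD (e R 0) (e R 2); clear derD.
  rewrite !(e0E, e1E, e2E) !br2_vec3 !mulmxBr !mul_mx_scalar !vec3_mul_rows.
  vec3_simpl; rewrite !br2_vec3; vec3_simpl.
  move=> /vec3_inj[_ e13_2 _] /vec3_inj[_ e12_2 e12_3].
  have k_eq : k = - gam ^+ 2 - bet ^+ 2 - alp * bet.
    have : gam * (k + gam ^+ 2 + bet ^+ 2 + alp * bet) = 0 by lra.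
    by move/eqP; rewrite mulf_eq0 (negbTE gam_neq0) /= => /eqP; lra.
  subst k.
  have alp_bet : alp = bet.
    have : gam ^+ 2 * (alp - bet) = 0 by lra.
    by move/eqP; rewrite mulf_eq0 sqrf_eq0 (negbTE gam_neq0) subr_eq0 => /eqP.
  rewrite {}alp_bet in e13_2 *.
  have bet0 : bet = 0.
    have : bet * (bet ^+ 2 + gam ^+ 2) = 0 by lra.
    have : 0 < bet ^+ 2 + gam ^+ 2 by rewrite ltr_wpDl ?sqr_ge0 ?exprn_even_gt0.
    by move=> /gt_eqF pos_neq0 /eqP; rewrite mulf_eq0 pos_neq0 orbF => /eqP.
  by rewrite bet0; split=> //; ring.
- move=> X Y; rewrite (vec3_coord X) (vec3_coord Y).
  move: (X 0 0) (X 0 1) (X 0 2) (Y 0 0) (Y 0 1) (Y 0 2) => x1 x2 x3 y1 y2 y3.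
  rewrite !br2_vec3 !mulmxBr !mul_mx_scalar !vec3_mul_rows; vec3_simpl.
  by rewrite !br2_vec3; vec3_simpl; rewrite alp0 bet0; congr vec3; ring.
Qed.
End G2.

Unset Implicit Arguments.
Theorem theorem4p5 (R : realFieldType) (alp bet gam lam0 c : R) :
  gam != 0 ->
  (alg_schouten_soliton (br2 alp bet gam)
     (nabla1 (br2 alp bet gam)) lam0 c
   <-> (alp = 0 /\ bet = 0 /\ c = - gam ^+ 2 + 2 * gam ^+ 2 * lam0)).
Proof.
move=> gam_neq0.
rewrite (alg_schouten_soliton_mx _ _ (ricop_nabla1 alp bet gam)).
rewrite ric1_shift_derivation // scal_nabla1.
split=> [[-> -> k_eq] | [-> [-> ->]]]; last by split=> //; ring.
by do !split=> //; lra.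
Qed.
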